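(* Let $G$ be a chordal graph, $X\subsetneq V(G)$ a clique, and $L_1,\dots,L_t$ the evaporation sequence of $G$ with exception set $X$. If $G\setminus X$ is connected and $X\subseteq N(L_t)$, then $X\cup L_t$ is a clique.
   Context: A vertex is simplicial if its neighborhood is a clique. For a chordal graph $G$ and a clique $X\subseteq V(G)$ (possibly empty), the evaporation sequence of $G$ with exception set $X$ is defined recursively: if $X=V(G)$ it is the empty sequence; otherwise let $L_1$ be the set of simplicial vertices of $G$ that are not in $X$ (this set is always nonempty), and the evaporation sequence is $L_1$ followed by the evaporation sequence of $G-L_1$ with exception set $X$. For $S\subseteq V(G)$, $N(S)$ denotes the set of vertices not in $S$ that are adjacent to some vertex of $S$. *)

(* A simple graph is a symmetric irreflexive relation e on a finType T;
   V(G) = T. Induced subgraphs are represented by vertex sets S : {set T}. *)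
From mathcomp Require Import all_boot.
Set Implicit Arguments. Unset Strict Implicit. Unset Printing Implicit Defensive.

Section Graphs.
Variables (T : finType) (e : rel T).

Definition simple_graph : Prop := symmetric e /\ irreflexive e.

Definition is_clique (K : {set T}) : Prop :=
  {in K &, forall u v, u != v -> e u v}.

(* chordal: G has no induced cycle of length >= 4, i.e. there is no sequence
   c of >= 4 distinct vertices whose adjacencies are exactly the
   cyclically consecutive pairs *)
Definition chordal : Prop :=
  ~ exists (x0 : T) (c : seq T),
      [/\ 4 <= size c, uniq c &
        forall i j, i < size c -> j < size c ->
          e (nth x0 c i) (nth x0 c j) =
            (j == i.+1 %% size c) || (i == j.+1 %% size c) ].

Definition nbhd_in (S : {set T}) (v : T) : {set T} := [set u in S | e v u].

Definition is_cliqueb (K : {set T}) : bool :=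
  [forall u in K, forall w in K, (u != w) ==> e u w].

Definition simplicial_in (S : {set T}) (v : T) : bool :=
  (v \in S) && is_cliqueb (nbhd_in S v).

(* L_1 for the graph G[S] with exception set X: simplicial vertices of G[S] not in X *)
Definition evap_layer (S X : {set T}) : {set T} :=
  [set v in S :\: X | simplicial_in S v ].

Inductive is_evap (X : {set T}) : {set T} -> seq {set T} -> Prop :=
  | evap_nil S : S = X -> is_evap X S [::]
  | evap_cons S Ls : S != X -> is_evap X (S :\: evap_layer S X) Ls ->
      is_evap X S (evap_layer S X :: Ls).

Definition nbhd_set (S : {set T}) : {set T} :=
  [set v | (v \notin S) && [exists u in S, e u v]].

Definition connected_minus (X : {set T}) : Prop :=
  forall u v, u \notin X -> v \notin X ->
    connect [rel x y | [&& e x y, x \notin X & y \notin X]] u v.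
End Graphs.

From mathcomp Require Import all_boot.
Set Implicit Arguments. Unset Strict Implicit. Unset Printing Implicit Defensive.

(* Let S0 be the vertex set of the last graph G[S0] of the
   evaporation, so that S0 \ X = L_t and every vertex of L_t is simplicial in
   G[S0].  Deleting a set of simplicial vertices never disconnects two of the
   remaining vertices (a path through a deleted simplicial vertex can shortcut
   between its two neighbours), so connectivity of G - X descends along the
   whole evaporation sequence: G[L_t] is connected.  A connected set of
   vertices that are all simplicial in a common graph is a clique, hence L_t
   is a clique.  Finally a vertex x adjacent to one simplicial vertex u of
   the clique L_t is adjacent to all of it, since the neighbourhood of u is a
   clique; with X <= N(L_t) this makes X :|: L_t a clique. *)

Section Simplicial.
Variables (T : finType) (e : rel T).
Hypothesis e_sym : symmetric e.

Definition induced_adj (A : {set T}) : rel T :=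
  [rel x y | [&& e x y, x \in A & y \in A]].

Lemma simplicial_adj S v a b : simplicial_in e S v -> a \in S -> b \in S ->
  e v a -> e v b -> a != b -> e a b.
Proof.
case/andP=> _ /forallP nbhd_clique aS bS va vb ab.
have /implyP := nbhd_clique a; rewrite /nbhd_in inE aS va => /(_ isT).
move=> /forallP /(_ b) /implyP; rewrite inE bS vb => /(_ isT) /implyP; exact.
Qed.

Lemma connect_invariant (r : rel T) (P : pred T) x y :
  (forall a b, P a -> r a b -> P b) -> connect r x y -> P x -> P y.
Proof.
move=> P_step /connectP [p r_p ->]; elim: p x r_p => [|z p IHp] x //=.
by case/andP=> rxz r_p Px; exact: IHp r_p (P_step _ _ Px rxz).
Qed.

(* Invariant: w is
   reached in G[A :\: L], or w is in L next to such a reached vertex. *)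
Lemma connect_remove_simplicial (S A L : {set T}) u v :
  A \subset S -> {in L, forall l, simplicial_in e S l} ->
  u \in A :\: L -> v \in A :\: L ->
  connect (induced_adj A) u v -> connect (induced_adj (A :\: L)) u v.
Proof.
move=> sAS L_simpl uAL vAL uv.
set reached := connect (induced_adj (A :\: L)) u.
pose P := [pred w | (w \in A) && (reached w || (w \in L) &&
  [exists z, [&& z \in A :\: L, reached z & e w z]])].
have reached_in w : reached w -> w \in A :\: L.
  move=> uw; apply: (connect_invariant _ uw uAL) => a b _.
  by case/and3P.
have extend w b : reached w -> e w b -> b \in A -> P b.
  move=> uw wb bA; rewrite /= bA /=.
  have wAL := reached_in _ uw.
  case bL: (b \in L); [apply/orP; right | apply/orP; left].
    by apply/existsP; exists w; rewrite wAL uw e_sym.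
  by apply: connect_trans uw (connect1 _); rewrite /induced_adj /= wb wAL !inE bL bA.
have /andP [_ /orP [//| /andP [vL _]]] : P v.
  apply: (connect_invariant _ uv); last by rewrite /= (subsetP (subsetDl _ _) _ uAL) /reached connect0.
  move=> a b /andP [_ /orP [ua | /andP [aL /existsP [z /and3P [zAL uz az]]]]].
    by case/and3P=> ab _ bA; exact: extend ua ab bA.
  case/and3P=> ab _ bA; have [<- | zb] := eqVneq z b.
    by rewrite /= (subsetP (subsetDl _ _) _ zAL) uz.
  have zS : z \in S by apply: (subsetP sAS); move: zAL; rewrite inE => /andP [].
  exact: extend uz (simplicial_adj (L_simpl _ aL) zS (subsetP sAS _ bA) az ab zb) bA.
by move: vAL; rewrite inE vL.
Qed.

Lemma connected_simplicial_adj (S A : {set T}) u v :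
  {in A, forall a, simplicial_in e S a} -> u \in A ->
  connect (induced_adj A) u v -> u != v -> e u v.
Proof.
move=> A_simpl uA uv; rewrite eq_sym; apply/implyP.
apply: (connect_invariant (P := [pred w | (w != u) ==> e u w]) _ uv); last by rewrite /= eqxx.
move=> a b /implyP ua /and3P [ab aA bA]; apply/implyP => bu.
have [au | /ua ua'] := eqVneq a u; first by rewrite -au.
have aS : a \in S by case/andP: (A_simpl _ aA).
have uS : u \in S by case/andP: (A_simpl _ uA).
have bS : b \in S by case/andP: (A_simpl _ bA).
by apply: (simplicial_adj (A_simpl _ aA) uS bS) => //; rewrite 1?e_sym // eq_sym.
Qed.

Lemma adj_simplicial_clique (S L : {set T}) x u l :
  {in L, forall a, simplicial_in e S a} -> is_clique e L ->
  x \in S -> u \in L -> l \in L -> e u x -> x != l -> e l x.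
Proof.
move=> L_simpl Lcl xS uL lL ux xl.
have [<- // | ul] := eqVneq u l.
have lS : l \in S by case/andP: (L_simpl _ lL).
by apply: (simplicial_adj (L_simpl _ uL) lS xS) => //; [exact: Lcl | rewrite eq_sym].
Qed.

Lemma evap_last_graph X S Ls : is_evap e X S Ls -> Ls != [::] ->
  exists S0 : {set T}, [/\ S0 \subset S, last set0 Ls = evap_layer e S0 X,
    S0 :\: evap_layer e S0 X = X &
    {in S0 :\: X &, forall u v,
      connect (induced_adj (S :\: X)) u v -> connect (induced_adj (S0 :\: X)) u v}].
Proof.
elim=> [//| S1 [|L Ls1] _ evS1 IH _].
  by exists S1; split => //; inversion evS1.
have [S0 [sS0 lastE S0_X conn0]] := IH isT.
exists S0; split => //; first exact: subset_trans sS0 (subsetDl _ _).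
move=> u v uS0 vS0 uv; apply: conn0 => //.
set L1 := evap_layer e S1 X.
have S1_X : S1 :\: L1 :\: X = S1 :\: X :\: L1 by rewrite !setDDl setUC.
have sub : S0 :\: X \subset S1 :\: X :\: L1 by rewrite -S1_X setSD.
rewrite S1_X; apply: (connect_remove_simplicial (S := S1)) => //.
- exact: subsetDl.
- by move=> l; rewrite inE => /andP [].
- exact: subsetP sub _ uS0.
- exact: subsetP sub _ vS0.
Qed.
Lemma evap_nonempty X S Ls : is_evap e X S Ls -> S != X -> Ls != [::].
Proof. by case=> // S' S'_X; rewrite S'_X eqxx. Qed.

Lemma evap_layer_last X S :
  S :\: evap_layer e S X = X -> S :\: X = evap_layer e S X.
Proof.
move=> S_X; apply/eqP; rewrite eqEsubset; apply/andP; split; last first.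
  by apply/subsetP => v; rewrite inE => /andP [].
apply/subsetP => v; apply: contraTT => vL.
by rewrite -{1}S_X !in_setD vL /=; case: (v \in S).
Qed.

Lemma connected_minus_induced X :
  connected_minus e X -> {in ~: X &, forall u v, connect (induced_adj (setT :\: X)) u v}.
Proof.
move=> G_X_conn u v; rewrite !inE => uX vX.
rewrite (eq_connect (e' := [rel x y | [&& e x y, x \notin X & y \notin X]])).
  exact: G_X_conn.
by move=> x y; rewrite /induced_adj /= !inE !andbT.
Qed.
End Simplicial.

Theorem mainTheorem6 (T : finType) (e : rel T) (X : {set T}) (Ls : seq {set T}) :
  simple_graph e -> chordal e ->
  is_clique e X -> X \proper [set: T] ->
  is_evap e X [set: T] Ls ->
  connected_minus e X ->
  X \subset nbhd_set e (last set0 Ls) ->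
  is_clique e (X :|: last set0 Ls).
Proof.
move=> [e_sym _] _ X_clique X_proper ev G_X_conn X_nbhd.
have Ls_nonempty : Ls != [::].
  by apply: evap_nonempty ev _; apply: contraTneq X_proper => <-; rewrite properE subxx.
have [S0 [_ lastE S0_X conn_descends]] := evap_last_graph e_sym ev Ls_nonempty.
rewrite lastE in X_nbhd *; set L := evap_layer e S0 X in S0_X X_nbhd *.
have L_def : S0 :\: X = L := evap_layer_last S0_X.
have L_simpl : {in L, forall l, simplicial_in e S0 l}.
  by move=> l; rewrite inE => /andP [].
have L_outside_X l : l \in L -> l \notin X by rewrite -L_def inE => /andP [].
have L_clique : is_clique e L.
  move=> u v uL vL; have uLX := L_outside_X _ uL; have vLX := L_outside_X _ vL.
  have L_conn : connect (induced_adj e L) u v.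
    rewrite -L_def; apply: conn_descends; rewrite ?L_def //.
    by apply: connected_minus_induced; rewrite ?inE.
  exact: connected_simplicial_adj L_simpl uL L_conn.
have X_adj_L x l : x \in X -> l \in L -> e l x.
  move=> xX lL; have := subsetP X_nbhd _ xX; rewrite inE => /andP [_ /existsP [u /andP [uL ux]]].
  have xS0 : x \in S0 by apply: subsetP xX; rewrite -S0_X subsetDl.
  apply: (adj_simplicial_clique L_simpl L_clique xS0 uL lL ux).
  by apply: contraNneq (L_outside_X _ lL) => <-.
move=> a b; rewrite !in_setU => /orP [aX | aL] /orP [bX | bL] ab.
- exact: X_clique.
- by rewrite e_sym X_adj_L.
- exact: X_adj_L.
- exact: L_clique.
Qed.
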